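(* Suppose Assumptions A1 and A2 hold. Then for any integers $n_1\ge n_2\ge0$, the delay $\tau_{n_1}$ is independent of the channel inputs $u(n_1)$ and $u(n_2)$.
   Context: Setting. Fix $\bar\tau\ge1$ and $\mathcal{D}=\{0,\dots,\bar\tau\}$. A networked feedback system has a SISO discrete-time LTI plant $P$ with strictly proper transfer function and a SISO discrete-time LTI controller $K$ with proper transfer function. Both are relaxed (at rest) at time $0$, and all signals are zero at negative times. The plant input is $v(k)+u_d(k)$, where $v$ is the external input. The plant output is $y$, and the controller output $u=Ky$ is the channel input. The receiver output is $$u_d(k)=\sum_{i=0}^{\bar\tau}\alpha_i\delta(\tau_{k-i}-i)u(k-i),$$ with fixed real weights $\alpha_i$ and Kronecker delta $\delta$. Assumptions. - A1: $\{\tau_k\}_{k\ge0}$ is i.i.d. on $\mathcal{D}$ with $\Pr\{\tau_k=i\}=p_i$, $\sum_ip_i=1$. - A2: the input sequence $\{v(k)\}$ is independent of $\{\tau_k\}$. *)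

From HB Require Import structures.
From mathcomp Require Import all_boot all_order all_algebra.
From mathcomp Require Import all_classical all_reals all_analysis.
Set Implicit Arguments. Unset Strict Implicit. Unset Printing Implicit Defensive.
Import Order.TTheory GRing.Theory Num.Theory.
Local Open Scope classical_set_scope.
Local Open Scope ring_scope.

Definition sig_ext (R : realType) (s : nat -> R) (t : int) : R :=
  match t with Posz m => s m | Negz _ => 0 end.

(* Input/output relation of a relaxed SISO discrete-time LTI system with
   transfer function N(z)/D(z), D monic, size N <= size D (proper):
   the difference equation  sum_i D_i y(k-n+i) = sum_i N_i w(k-n+i),
   n = deg D, with all signals zero at negative times. *)
Definition lti_io (R : realType) (N D : {poly R}) (w y : nat -> R) : Prop :=
  forall k : nat,
    \sum_(i < size D) D`_i * sig_ext y (k%:Z - ((size D).-1)%:Z + i%:Z)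
    = \sum_(i < size D) N`_i * sig_ext w (k%:Z - ((size D).-1)%:Z + i%:Z).

Definition proper_tf (R : realType) (N D : {poly R}) : Prop :=
  D \is monic /\ (size N <= size D)%N.
Definition strictly_proper_tf (R : realType) (N D : {poly R}) : Prop :=
  D \is monic /\ (size N < size D)%N.

Definition receiver_out (R : realType) (taubar : nat) (alpha : nat -> R)
  (tau : nat -> nat) (u : nat -> R) (k : nat) : R :=
  \sum_(i < taubar.+1 | (i <= k)%N)
     alpha i * (tau (k - i)%N == i)%:R * u (k - i)%N.

Definition sigma_rv d d' (T : measurableType d) (V : measurableType d')
  (I : Type) (X : I -> T -> V) : set_system T :=
  <<s [set E | exists i B, measurable B /\ E = X i @^-1` B] >>.

Definition indep_sets d (T : measurableType d) (R : realType)
  (P : probability T R) (G1 G2 : set_system T) : Prop :=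
  forall E F, G1 E -> G2 F -> P (E `&` F) = (P E * P F)%E.

(* A1: {tau_k} i.i.d. on {0..taubar} with Pr{tau_k = i} = p_i:
   tau_k takes values in {0,...,taubar}, the events are measurable, and for
   every finite set of distinct times s and values f, the joint probability
   factorizes: P(cap_{k in s} {tau_k = f k}) = prod_{k in s} p_{f k}. *)
Definition iid_delays d (T : measurableType d) (R : realType)
  (P : probability T R) (taubar : nat) (p : nat -> R) (tau : nat -> T -> nat) : Prop :=
  (forall k w, (tau k w <= taubar)%N) /\
  (forall k i, measurable [set w | tau k w = i]) /\
  (forall (s : seq nat) (f : nat -> nat), uniq s ->
     (forall k, (f k <= taubar)%N) ->
     P (\bigcap_(k in [set k | k \in s]) [set w | tau k w = f k])
     = (\prod_(k <- s) p (f k))%:E).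

From HB Require Import structures.
From mathcomp Require Import all_boot all_order all_algebra.
From mathcomp Require Import all_classical all_reals all_analysis.
From mathcomp Require Import measurable_realfun zify.
Set Implicit Arguments. Unset Strict Implicit. Unset Printing Implicit Defensive.
Import Order.TTheory GRing.Theory Num.Theory.
Local Open Scope classical_set_scope.
Local Open Scope ring_scope.

(* Partition Omega into the finitely many cells on which the past delays
   tau_0, ..., tau_(n1-1) are constant.  Since the plant is strictly proper,
   u(k) for k <= n1 depends on the delays only through tau_j with j < n1, so on
   each cell it coincides with a sigma(v)-measurable function, and every event F
   of sigma(u(n1), u(n2)) agrees on the cell with an event A of sigma(v).  By A2,
   A is independent of the cell and of its intersection with {tau_n1 \in B}; by
   A1 the cell is independent of tau_n1.  Summing over the cells gives
   P({tau_n1 \in B} /\ F) = P(tau_n1 \in B) P(F). *)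

Notation sigma_rv_type X :=
  (g_sigma_algebraType [set E | exists i B, measurable B /\ E = X i @^-1` B]).

Section sigma_rv.
Context {d d' : measure_display} {T : measurableType d} {V : measurableType d'}.

Lemma sigma_rv_gen (I : Type) (X : I -> T -> V) i (B : set V) :
  measurable B -> sigma_rv X (X i @^-1` B).
Proof. by move=> mB; apply: sub_gen_smallest; exists i, B. Qed.

Lemma sigma_rv_measurable (I : Type) (X : I -> T -> V) :
  (forall i, measurable_fun setT (X i)) -> sigma_rv X `<=` measurable.
Proof.
move=> mX; apply: smallest_sub; first exact: sigma_algebra_measurable.
by move=> _ [i [B [mB ->]]]; rewrite -[X in measurable X]setTI; exact: mX.
Qed.

Lemma sigma_rv1_preimage (X : T -> V) E :
  sigma_rv (fun _ : unit => X) E -> exists2 B, measurable B & E = X @^-1` B.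
Proof.
have sX : sigma_algebra setT (preimage_set_system setT X measurable).
  exact/sigma_algebra_preimage/sigma_algebra_measurable.
have gen_sub : [set E | exists (_ : unit) B, measurable B /\ E = X @^-1` B]
    `<=` preimage_set_system setT X measurable.
  by move=> _ [_ [B [mB ->]]]; exists B; rewrite // setTI.
by move=> /(smallest_sub sX gen_sub) [B mB <-]; exists B; rewrite // setTI.
Qed.

Lemma measurable_fun_sigma_rv (I : Type) (X : I -> T -> V) i :
  measurable_fun (T := sigma_rv_type X) setT (X i).
Proof. by move=> _ B mB; apply: sub_gen_smallest; exists i, B; rewrite setTI. Qed.

End sigma_rv.

Lemma measurable_fun_nat_levels {d} {T : measurableType d} (f : T -> nat) :
  (forall i, measurable [set x | f x = i]) -> measurable_fun setT f.
Proof.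
move=> mf _ B _; have -> : setT `&` f @^-1` B = \bigcup_(i in B) [set x | f x = i].
  apply/seteqP; split => [x [_ Bx]|x [i Bi fxi]]; first by exists (f x).
  by split; rewrite // /preimage /= fxi.
exact: bigcup_measurable.
Qed.

Section fibers.
Context {d : measure_display} {T : measurableType d} {R : realType}.
Context {I : finType} (h : T -> I).
Variables (P : probability T R) (A : I -> set T) (E F : set T).
Hypothesis mh : forall i, measurable (h @^-1` [set i]).

Lemma measure_sum_fibers (mu : {measure set T -> \bar R}) X : measurable X ->
  mu X = (\sum_(i : I) mu (X `&` h @^-1` [set i]))%E.
Proof.
move=> mX; have {1}-> : X = \bigcup_(i in setT) (X `&` h @^-1` [set i]).
  by rewrite -setI_bigcupr; apply/esym/setIidl => x _; exists (h x).
rewrite measure_fin_bigcup //; last by move=> i _; exact: measurableI.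
- rewrite [RHS]fsbig_seq ?index_enum_uniq //; apply: eq_fsbigl.
  by apply/seteqP; split => i //= _; rewrite mem_index_enum.
- exact: finite_finset.
apply/trivIsetP => i j _ _ ij; apply/seteqP; split => // x [[_ hxi] [_ hxj]].
by rewrite -hxi -hxj eqxx in ij.
Qed.

Hypotheses (mA : forall i, measurable (A i)) (mE : measurable E).
Hypothesis FA : forall i, F `&` h @^-1` [set i] = A i `&` h @^-1` [set i].
Hypothesis indepA : forall i, P (A i `&` h @^-1` [set i]) = (P (A i) * P (h @^-1` [set i]))%E.
Hypothesis indepAE : forall i,
  P (A i `&` (h @^-1` [set i] `&` E)) = (P (A i) * P (h @^-1` [set i] `&` E))%E.
Hypothesis indepE : forall i, P (h @^-1` [set i] `&` E) = (P (h @^-1` [set i]) * P E)%E.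

Lemma indep_fibers : P (E `&` F) = (P E * P F)%E.
Proof.
have mF : measurable F.
  have -> : F = \bigcup_(i in setT) (A i `&` h @^-1` [set i]).
    under eq_bigcupr do rewrite -FA.
    rewrite -setI_bigcupr.
    by apply/esym/setIidl => x _; exists (h x).
  by apply: fin_bigcup_measurable => [|i _]; [exact: finite_finset|exact: measurableI].
have PF : P F = (\sum_(i : I) P (A i) * P (h @^-1` [set i]))%E.
  apply: eq_trans (measure_sum_fibers P mF) _; apply: eq_bigr => i _.
  by rewrite FA; exact: indepA.
apply: eq_trans (measure_sum_fibers P (measurableI _ _ mE mF)) _.
rewrite PF ge0_sume_distrr => [|i _]; last exact: mule_ge0.
apply: eq_bigr => i _; rewrite -setIA FA setIC -setIA.
by apply: eq_trans (indepAE i) _; rewrite indepE muleA muleC.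
Qed.

End fibers.

Section measurable_on.
Context {d : measure_display} {T : measurableType d} {R : realType}.
Variable C : set T.

Definition measurable_on (f : T -> R) :=
  exists2 g : T -> R, measurable_fun setT g & forall x, C x -> f x = g x.

Lemma measurable_on_fun f : measurable_fun setT f -> measurable_on f.
Proof. by exists f. Qed.

Lemma measurable_on_const f c : (forall x, C x -> f x = c) -> measurable_on f.
Proof. by exists (cst c). Qed.

Lemma measurable_on_cst c : measurable_on (cst c).
Proof. by exists (cst c). Qed.

Lemma measurable_onD f g : measurable_on f -> measurable_on g -> measurable_on (f \+ g).
Proof.
move=> [f' mf' ff'] [g' mg' gg']; exists (f' \+ g'); first exact: measurable_funD.
by move=> x Cx /=; rewrite ff' // gg'.
Qed.

Lemma measurable_onB f g : measurable_on f -> measurable_on g -> measurable_on (f \- g).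
Proof.
move=> [f' mf' ff'] [g' mg' gg']; exists (f' \- g'); first exact: measurable_funB.
by move=> x Cx /=; rewrite ff' // gg'.
Qed.

Lemma measurable_onM f g : measurable_on f -> measurable_on g -> measurable_on (f \* g).
Proof.
move=> [f' mf' ff'] [g' mg' gg']; exists (f' \* g'); first exact: measurable_funM.
by move=> x Cx /=; rewrite ff' // gg'.
Qed.

Lemma measurable_on_sum (I : Type) (r : seq I) (P : pred I) (F : I -> T -> R) :
  (forall i, P i -> measurable_on (F i)) ->
  measurable_on (fun x => \sum_(i <- r | P i) F i x).
Proof.
move=> mF; elim: r => [|i r IH].
  by under eq_fun do rewrite big_nil; exact: measurable_on_cst.
have [Pi|nPi] := boolP (P i).
  by under eq_fun do rewrite big_cons Pi; exact: measurable_onD (mF i Pi) IH.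
by under eq_fun do rewrite big_cons (negbTE nPi).
Qed.

Definition trace_measurable : set_system T :=
  [set F | exists2 A, measurable A & F `&` C = A `&` C].

Lemma sigma_algebra_trace_measurable : sigma_algebra setT trace_measurable.
Proof.
split.
- by exists set0; rewrite ?set0I.
- move=> F [A mA FA]; exists (~` A); first exact: measurableC.
  apply/seteqP; split => [x [[_ nFx] Cx]|x [nAx Cx]]; split => //.
    by move=> Ax; apply: nFx; have [] : (F `&` C) x by rewrite FA.
  by split => // Fx; apply: nAx; have [] : (A `&` C) x by rewrite -FA.
- move=> F FA; have /choice [A /all_and2 [mA FAn]] :
      forall n, exists A, measurable A /\ F n `&` C = A `&` C.
    by move=> n; have [A mA FAn] := FA n; exists A.
  exists (\bigcup_n A n); first exact: bigcupT_measurable.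
  by rewrite !setI_bigcupl; apply: eq_bigcupr => n _.
Qed.

Lemma sigma_rv_sub_trace (I : Type) (X : I -> T -> R) :
  (forall i, measurable_on (X i)) -> sigma_rv X `<=` trace_measurable.
Proof.
move=> mX; apply: smallest_sub; first exact: sigma_algebra_trace_measurable.
move=> _ [i [B [mB ->]]]; have [g mg Xg] := mX i.
exists (g @^-1` B); first by rewrite -[X in measurable X]setTI; exact: mg.
by apply/seteqP; split => x [Bx Cx]; split; rewrite //= /preimage ?Xg // -Xg.
Qed.

End measurable_on.

Lemma lti_io_solve (R : realType) (N D : {poly R}) (w y : nat -> R) k :
  D \is monic -> lti_io N D w y ->
  y k = \sum_(i < (size D).-1) N`_i * sig_ext w (k%:Z - ((size D).-1)%:Z + i%:Z)
        + N`_(size D).-1 * w k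
        - \sum_(i < (size D).-1) D`_i * sig_ext y (k%:Z - ((size D).-1)%:Z + i%:Z).
Proof.
move=> mD /(_ k); set n := (size D).-1.
have sizeD : size D = n.+1 by rewrite /n prednK // size_poly_gt0 monic_neq0.
have lcD : D`_n = 1 by have := monicP mD; rewrite lead_coefE.
rewrite sizeD !big_ord_recr /= subrK lcD mul1r => <-.
by rewrite addrAC subrr add0r.
Qed.

Lemma strictly_proper_coef_deg (R : realType) (N D : {poly R}) :
  strictly_proper_tf N D -> N`_(size D).-1 = 0.
Proof. by move=> [_ ltND]; apply: nth_default; rewrite -ltnS; case: (size D) ltND. Qed.

Section causal_measurable_on.
Context {d : measure_display} {T : measurableType d} {R : realType}.
Variable C : set T.

Lemma measurable_on_sig_ext (z : nat -> T -> R) (k : nat) (t : int) :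
  t < k%:Z -> (forall m, (m < k)%N -> measurable_on C (z m)) ->
  measurable_on C (fun x => sig_ext (z ^~ x) t).
Proof.
case: t => [m|m] /= ltmk mz; last exact: measurable_on_cst.
by apply: mz; rewrite ltz_nat in ltmk.
Qed.

Lemma measurable_on_lti (N D : {poly R}) (w y : nat -> T -> R) k :
  D \is monic -> (forall x, lti_io N D (w ^~ x) (y ^~ x)) ->
  (forall m, (m < k)%N -> measurable_on C (w m) /\ measurable_on C (y m)) ->
  measurable_on C (fun x => N`_(size D).-1 * w k x) ->
  measurable_on C (y k).
Proof.
move=> mD io past wk.
have past_sum (z : nat -> T -> R) c : (forall m, (m < k)%N -> measurable_on C (z m)) ->
    measurable_on C (fun x => \sum_(i < (size D).-1)
      c i * sig_ext (z ^~ x) (k%:Z - ((size D).-1)%:Z + i%:Z)).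
  move=> mz; apply: measurable_on_sum => i _.
  apply: measurable_onM; first exact: measurable_on_cst.
  by apply: measurable_on_sig_ext mz; have := ltn_ord i; lia.
change (measurable_on C (fun x => y k x)).
under eq_fun do rewrite (lti_io_solve k mD (io _)).
apply: measurable_onB; last by apply: past_sum => m /past[].
by apply: measurable_onD wk; apply: past_sum => m /past[].
Qed.

End causal_measurable_on.

Section closed_loop.
Context {d : measure_display} {T : measurableType d} {R : realType}.
Variables (C : set T) (n taubar : nat) (alpha : nat -> R) (NP DP NK DK : {poly R}).
Variables (tau : nat -> T -> nat) (v y u : nat -> T -> R).
Hypotheses (hP : strictly_proper_tf NP DP) (hK : proper_tf NK DK).
Hypothesis plant : forall x, lti_io NP DP
  (fun k => v k x + receiver_out taubar alpha (tau ^~ x) (u ^~ x) k) (y ^~ x).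
Hypothesis controller : forall x, lti_io NK DK (y ^~ x) (u ^~ x).
Hypothesis v_on : forall k, measurable_on C (v k).
Hypothesis tau_const : forall k, (k < n)%N -> exists c, forall x, C x -> tau k x = c.

Lemma measurable_on_receiver_out m : (m < n)%N ->
  (forall j, (j <= m)%N -> measurable_on C (u j)) ->
  measurable_on C (fun x => receiver_out taubar alpha (tau ^~ x) (u ^~ x) m).
Proof.
move=> ltmn u_on; apply: measurable_on_sum => i _.
apply: measurable_onM; last exact/u_on/leq_subr.
apply: measurable_onM; first exact: measurable_on_cst.
have [c tauc] := tau_const (leq_ltn_trans (leq_subr i m) ltmn).
by apply: (measurable_on_const (c := (c == i)%:R)) => x Cx; rewrite tauc.
Qed.

Lemma closed_loop_measurable_on k : (k <= n)%N ->
  measurable_on C (y k) /\ measurable_on C (u k).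
Proof.
elim/ltn_ind: k => k IH lekn.
have past m : (m < k)%N -> measurable_on C (y m) /\ measurable_on C (u m).
  by move=> ltmk; apply: IH => //; lia.
have y_on : measurable_on C (y k).
  apply: (measurable_on_lti
    (w := fun m x => v m x + receiver_out taubar alpha (tau ^~ x) (u ^~ x) m)
    hP.1 plant) => [m ltmk|].
    split; last exact: (past m ltmk).1.
    apply: measurable_onD (v_on m) _; apply: measurable_on_receiver_out; first lia.
    by move=> j lejm; apply: (past j _).2; lia.
  (* strict properness: y k does not see the receiver output at time k *)
  apply: (measurable_on_const (c := 0)) => x _.
  by rewrite strictly_proper_coef_deg // mul0r.
split=> //; apply: (measurable_on_lti hK.1 controller) => [m /past[]//|].
exact: measurable_onM (measurable_on_cst _ _) y_on.
Qed.

End closed_loop.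

Section delays.
Context {d : measure_display} {T : measurableType d} {R : realType}.
Variables (P : probability T R) (taubar : nat) (p : nat -> R) (tau : nat -> T -> nat).

(* [inord] clamps out-of-range values; under A1 (delays at most [taubar]) the
   fibers of [delay_history n] are exactly the cells on which
   tau_0, ..., tau_(n-1) are constant. *)
Definition delay_at k x : 'I_taubar.+1 := inord (tau k x).

Definition delay_history n x : {ffun 'I_n -> 'I_taubar.+1} :=
  [ffun k : 'I_n => delay_at k x].

Lemma delay_at_sigma k i : sigma_rv tau (delay_at k @^-1` [set i]).
Proof. by apply: (sigma_rv_gen (X := tau) k (B := [set m | inord m = i])). Qed.

Lemma delay_history_sigma n f : sigma_rv tau (delay_history n @^-1` [set f]).
Proof.
have -> : delay_history n @^-1` [set f] =
    \bigcap_(k in [set: 'I_n]) delay_at k @^-1` [set f k].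
  apply/seteqP; split => [x /= <- k _|x /= hx]; first by rewrite ffunE.
  by apply/ffunP => k; rewrite ffunE hx.
apply: (@fin_bigcap_measurable _ (sigma_rv_type tau)); first exact: finite_finset.
by move=> k _; exact: delay_at_sigma.
Qed.

Hypothesis iid : iid_delays P taubar p tau.

Lemma sigma_rv_delays_measurable : sigma_rv tau `<=` measurable.
Proof. by apply: sigma_rv_measurable => k; apply: measurable_fun_nat_levels; exact: iid.2.1. Qed.

Lemma delay_atE k x : delay_at k x = tau k x :> nat.
Proof. by rewrite inordK // ltnS iid.1. Qed.

Lemma delay_history_tau n f x k (ltkn : (k < n)%N) :
  delay_history n x = f -> tau k x = f (Ordinal ltkn).
Proof. by move=> <-; rewrite ffunE delay_atE. Qed.

Let delays_event (s : seq nat) (g : nat -> nat) :=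
  \bigcap_(k in [set k | k \in s]) [set x | tau k x = g k].

Lemma iid_delays_setI s t g : uniq (s ++ t) -> (forall k, (g k <= taubar)%N) ->
  P (delays_event s g `&` delays_event t g) =
  (P (delays_event s g) * P (delays_event t g))%E.
Proof.
move=> ust gle; move: (ust); rewrite cat_uniq => /and3P [us _ ut].
have -> : delays_event s g `&` delays_event t g = delays_event (s ++ t) g.
  rewrite /delays_event -bigcap_setU; congr bigcap.
  by apply/seteqP; split => k /=; rewrite mem_cat => /orP.
by rewrite !iid.2.2 // big_cat EFinM.
Qed.

Lemma delay_history_at_indep n f i :
  P (delay_history n @^-1` [set f] `&` delay_at n @^-1` [set i]) =
  (P (delay_history n @^-1` [set f]) * P (delay_at n @^-1` [set i]))%E.
Proof.
pose g k : 'I_taubar.+1 := odflt i (omap f (insub k)).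
have gf (k : 'I_n) : g k = f k by rewrite /g valK.
have gi : g n = i by rewrite /g insubF // ltnn.
have -> : delay_history n @^-1` [set f] = delays_event (iota 0 n) g.
  apply/seteqP; split => [x /= hx k|x /= hx].
    by rewrite /= mem_iota leq0n add0n => ltkn; rewrite (delay_history_tau ltkn hx) -gf.
  apply/ffunP => k; apply: val_inj; rewrite ffunE /= delay_atE (hx k).
    by rewrite (gf k).
  by rewrite /= mem_iota leq0n add0n ltn_ord.
have -> : delay_at n @^-1` [set i] = delays_event [:: n] g.
  apply/seteqP; split => x /= hx.
    by move=> k /=; rewrite mem_seq1 => /eqP ->; rewrite gi -hx delay_atE.
  by apply: val_inj; rewrite /= delay_atE -gi hx //= mem_seq1.
apply: iid_delays_setI => [|k]; last by rewrite -ltnS.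
by rewrite cat_uniq iota_uniq /= mem_iota ltnn andbF.
Qed.

Lemma delay_history_preimage_indep n f (B : set nat) :
  P (delay_history n @^-1` [set f] `&` tau n @^-1` B) =
  (P (delay_history n @^-1` [set f]) * P (tau n @^-1` B))%E.
Proof.
(* {tau n \in B} agrees on each fiber {delay_at n = j} with the constant event
   [B j], and constant events are independent of everything. *)
have m_tau := sigma_rv_delays_measurable.
have const_event (j : 'I_taubar.+1) : [set _ : T | B j] = setT \/ [set _ : T | B j] = set0.
  by have [Bj|nBj] := pselect (B j); [left|right]; apply/seteqP; split.
have indep_const (j : 'I_taubar.+1) X :
    P ([set _ | B j] `&` X) = (P [set _ | B j] * P X)%E.
  have [->|->] := const_event j; first by rewrite setTI probability_setT mul1e.
  by rewrite set0I measure0 mul0e.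
apply: (indep_fibers (h := delay_at n) (A := fun j => [set _ | B j])).
- by move=> j; apply: m_tau; exact: delay_at_sigma.
- by move=> j; have [->|->] := const_event j.
- by apply: m_tau; exact: delay_history_sigma.
- move=> j; apply/seteqP; split=> x [Bx hx]; split=> //; move: Bx;
    by rewrite /= -hx delay_atE.
- by move=> j; exact: indep_const.
- by move=> j; exact: indep_const.
- by move=> j; rewrite setIC delay_history_at_indep muleC.
Qed.

End delays.

Theorem lemma3p3 (R : realType) (d : measure_display) (Omega : measurableType d)
  (P : probability Omega R) (taubar : nat) (htaubar : (1 <= taubar)%N)
  (p : nat -> R) (alpha : nat -> R)
  (NP DP NK DK : {poly R})
  (tau : nat -> Omega -> nat) (v y u : nat -> Omega -> R) :
  strictly_proper_tf NP DP ->
  proper_tf NK DK ->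
  (forall i, 0 <= p i) ->
  \sum_(i < taubar.+1) p i = 1 ->
  (* A1 *)
  iid_delays P taubar p tau ->
  (* A2 *)
  (forall k, measurable_fun setT (v k)) ->
  indep_sets P (sigma_rv v) (sigma_rv tau) ->
  (* the closed loop, pathwise *)
  (forall w, lti_io NP DP
     (fun k => v k w + receiver_out taubar alpha (fun j => tau j w) (fun j => u j w) k)
     (fun k => y k w)) ->
  (forall w, lti_io NK DK (fun k => y k w) (fun k => u k w)) ->
  forall n1 n2 : nat, (n2 <= n1)%N ->
  indep_sets P (sigma_rv (fun _ : unit => tau n1))
               (sigma_rv (fun b : bool => if b then u n1 else u n2)).
Proof.
move=> hP hK _ _ iid mv indep_v_tau plant controller n1 n2 len E F.
move=> /sigma_rv1_preimage [B _ ->] Fu.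
have m_tau := sigma_rv_delays_measurable iid.
pose cell f := delay_history taubar tau n1 @^-1` [set f].
have u_on f b : measurable_on (T := sigma_rv_type v) (cell f) (if b then u n1 else u n2).
  have v_on k : measurable_on (T := sigma_rv_type v) (cell f) (v k).
    by apply: measurable_on_fun; exact: measurable_fun_sigma_rv.
  have tau_const k : (k < n1)%N -> exists c, forall x, cell f x -> tau k x = c.
    move=> ltkn; exists (f (Ordinal ltkn)) => x fx.
    exact: (delay_history_tau iid ltkn fx).
  have loop := closed_loop_measurable_on (T := sigma_rv_type v)
    hP hK plant controller v_on tau_const.
  by case: b; [exact: (loop n1 _).2|exact: (loop n2 len).2].
have /choice [A hA] f : exists A, sigma_rv v A /\ F `&` cell f = A `&` cell f.
  by have [A mA FA] := sigma_rv_sub_trace (u_on f) Fu; exists A.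
apply: (indep_fibers (h := delay_history taubar tau n1) (A := A)) => [f|f||f|f|f|f].
- by apply: m_tau; exact: delay_history_sigma.
- exact: sigma_rv_measurable mv _ (hA f).1.
- by apply: m_tau; exact: sigma_rv_gen.
- exact: (hA f).2.
- by apply: indep_v_tau; [exact: (hA f).1|exact: delay_history_sigma].
- apply: indep_v_tau; first exact: (hA f).1.
  apply: (@measurableI _ (sigma_rv_type tau)); first exact: delay_history_sigma.
  exact: sigma_rv_gen.
- exact: delay_history_preimage_indep iid _ _ _.
Qed.
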